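(* Let $(X,d_X)$ be a metric space and let $r,R\in(0,\infty)$. (i) $\Delta_X^{(c)}$ and $\Delta_X^{(u)}$ are non-decreasing functions. (ii) If $\Delta_X^{(c)}(R)<\infty$, then $\Delta_X^{(u)}(\Delta_X^{(c)}(R)+\varepsilon)\geq R$ for all $\varepsilon>0$. (iii) If $\Delta_X^{(u)}(r)>0$, then $\Delta_X^{(c)}(\Delta_X^{(u)}(r)-\varepsilon)\leq r$ for all $0<\varepsilon<\Delta_X^{(u)}(r)$. (iv) $\Delta_X^{(u)}(s)>0$ for all $s>0$ if and only if $\lim_{R\to0}\Delta_X^{(c)}(R)=0$. (v) $\Delta_X^{(c)}(s)<\infty$ for all $s\in[0,\infty)$ if and only if $\lim_{r\to\infty}\Delta_X^{(u)}(r)=\infty$.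
   Context: For a cover $\mathcal{U}$ of $X$: $\mathrm{diam}(\mathcal{U})=\sup_{U\in\mathcal{U}}\mathrm{diam}(U)$; $\mathcal{L}(\mathcal{U})=\sup\{d\in[0,\infty): \text{every } E\subseteq X \text{ with } \mathrm{diam}(E)<d \text{ is contained in some } U\in\mathcal{U}\}$; point-finite means each point lies in only finitely many members. $\Delta_X^{(u)},\Delta_X^{(c)}\colon[0,\infty)\to[0,\infty]$ are $\Delta_X^{(u)}(r)=\sup\{\mathcal{L}(\mathcal{U}): \mathcal{U} \text{ point-finite cover of } X,\ \mathrm{diam}(\mathcal{U})\leq r\}$ and $\Delta_X^{(c)}(R)=\inf\{\mathrm{diam}(\mathcal{U}): \mathcal{U} \text{ point-finite cover of } X,\ \mathcal{L}(\mathcal{U})\geq R\}$. (The condition in (iv) is the uniform Stone property and in (v) the coarse Stone property.) *)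

From HB Require Import structures.
From mathcomp Require Import all_boot all_order all_algebra.
From mathcomp Require Import all_classical all_reals all_analysis.
Set Implicit Arguments. Unset Strict Implicit. Unset Printing Implicit Defensive.
Import Order.TTheory GRing.Theory Num.Theory.
Local Open Scope classical_set_scope.
Local Open Scope ring_scope.

Section Defs.
Context {R : realType} {T : Type} (d : T -> T -> R).

(* d is a metric on the whole type T (the space X is T). *)
Definition is_metric : Prop :=
  (forall x y, d x y = 0 <-> x = y) /\
  (forall x y, d x y = d y x) /\
  (forall x y z, d x z <= d x y + d y z).

(* diameter of a subset, in [0, +oo]; diam(empty) = 0 *)
Definition diam (E : set T) : \bar R :=
  ereal_sup ([set z | exists x y, E x /\ E y /\ z = (d x y)%:E] `|` [set 0%E]).

Definition is_cover (U : set (set T)) : Prop :=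
  forall x, exists2 A, U A & A x.

Definition point_finite (U : set (set T)) : Prop :=
  forall x, finite_set [set A | U A /\ A x].

Definition pf_cover (U : set (set T)) : Prop := is_cover U /\ point_finite U.

(* diam(U) = sup of the diameters of members (0 for the empty family) *)
Definition cover_diam (U : set (set T)) : \bar R :=
  ereal_sup ([set diam A | A in U] `|` [set 0%E]).

Definition lebesgue_number (U : set (set T)) : \bar R :=
  ereal_sup [set delta%:E | delta in
    [set delta : R | 0 <= delta /\
       forall E : set T, (diam E < delta%:E)%E -> exists2 A, U A & E `<=` A]].

Definition Delta_u (r : R) : \bar R :=
  ereal_sup [set lebesgue_number U | U in
    [set U | pf_cover U /\ (cover_diam U <= r%:E)%E]].

Definition Delta_c (Rr : R) : \bar R :=
  ereal_inf [set cover_diam U | U in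
    [set U | pf_cover U /\ (Rr%:E <= lebesgue_number U)%E]].

End Defs.

From HB Require Import structures.
From mathcomp Require Import all_boot all_order all_algebra.
From mathcomp Require Import all_classical all_reals all_analysis.
From mathcomp Require Import lra.
Import Order.TTheory GRing.Theory Num.Theory.
Local Open Scope classical_set_scope.
Local Open Scope ring_scope.

(* A single point-finite cover U with L(U) >= s and diam(U) <= r witnesses both
   Delta_c(s) <= r and Delta_u(r) >= s.  Approximating the infimum, resp. the
   supremum, by such covers gives the two halves of a Galois-type duality
   between Delta_c and Delta_u, and (ii)-(v) are read off from it together with
   the monotonicity (i). *)

Section ExtendedReals.
Context {R : realType}.
Local Open Scope ereal_scope.

Lemma ereal_gt0_gt_real (x : \bar R) : 0 < x -> exists2 e : R, (0 < e)%R & e%:E < x.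
Proof.
case: x => [r | |] //; last by exists 1%R; rewrite ?ltry.
by rewrite (lte_fin 0) => r0; exists (r / 2)%R; rewrite ?lte_fin; lra.
Qed.

Lemma ge0_cvge0 {I : Type} {F : set_system I} {FF : Filter F} (f : I -> \bar R) :
  (forall i, 0 <= f i) ->
  (forall e : R, (0 < e)%R -> \forall i \near F, f i <= e%:E) ->
  f @ F --> 0.
Proof.
move=> f_ge0 f_small; apply/fine_cvgP; split.
  apply: filterS (f_small 1%R ltr01) => i fi1.
  by rewrite ge0_fin_numE // (le_lt_trans fi1) ?ltry.
apply/cvgrPdist_le => e e0; apply: filterS (f_small e e0) => i /=.
have := f_ge0 i; case: (f i) => [y | |] //=.
by rewrite !lee_fin sub0r normrN => y0 ye; rewrite ger0_norm.
Qed.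

End ExtendedReals.

Section StoneFunctions.
Context {R : realType} {T : Type} (d : T -> T -> R).
Local Open Scope ereal_scope.

Lemma cover_diam_ge0 U : 0 <= cover_diam d U.
Proof. by apply: ereal_sup_ubound; right. Qed.

Lemma Delta_c_ge0 s : 0 <= Delta_c d s.
Proof. by apply: le_ereal_inf_tmp => _ [U _ <-]; exact: cover_diam_ge0. Qed.

Lemma Delta_c_fin_num {s} : Delta_c d s < +oo -> Delta_c d s \is a fin_num.
Proof. by rewrite ge0_fin_numE // Delta_c_ge0. Qed.

Lemma lebesgue_number_le_Delta_u U r :
  pf_cover U -> cover_diam d U <= r%:E -> lebesgue_number d U <= Delta_u d r.
Proof. by move=> pfU dU; apply: ereal_sup_ubound; exists U. Qed.

Lemma Delta_c_le_cover_diam U s :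
  pf_cover U -> s%:E <= lebesgue_number d U -> Delta_c d s <= cover_diam d U.
Proof. by move=> pfU LU; apply: ereal_inf_lbound; exists U. Qed.

Lemma Delta_u_gt r x : x < Delta_u d r -> exists U,
  [/\ pf_cover U, cover_diam d U <= r%:E & x < lebesgue_number d U].
Proof. by move=> /ereal_sup_gt [_ [U [pfU dU] <-] xL]; exists U. Qed.

Lemma Delta_c_lt s x : Delta_c d s < x -> exists U,
  [/\ pf_cover U, s%:E <= lebesgue_number d U & cover_diam d U < x].
Proof. by move=> /ereal_inf_lt [_ [U [pfU LU] <-] dx]; exists U. Qed.

Lemma le_Delta_c {s t} : (s <= t)%R -> Delta_c d s <= Delta_c d t.
Proof.
move=> st; apply: le_ereal_inf_tmp => _ [U [pfU LU] <-].
by apply: Delta_c_le_cover_diam => //; apply: le_trans LU; rewrite lee_fin.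
Qed.

Lemma le_Delta_u {s t} : (s <= t)%R -> Delta_u d s <= Delta_u d t.
Proof.
move=> st; apply: ge_ereal_sup => _ [U [pfU dU] <-].
by apply: lebesgue_number_le_Delta_u => //; apply: le_trans dU _; rewrite lee_fin.
Qed.

Lemma Delta_u_ge_of_Delta_c_lt {s r} : Delta_c d s < r%:E -> s%:E <= Delta_u d r.
Proof.
move=> /Delta_c_lt [U [pfU LU dU]].
by apply: le_trans LU _; apply: lebesgue_number_le_Delta_u => //; exact: ltW.
Qed.

Lemma Delta_c_le_of_lt_Delta_u {s r} : s%:E < Delta_u d r -> Delta_c d s <= r%:E.
Proof.
move=> /Delta_u_gt [U [pfU dU LU]].
by apply: le_trans dU; apply: Delta_c_le_cover_diam => //; exact: ltW.
Qed.

Lemma uniform_StoneP :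
  (forall s, (0 < s)%R -> 0 < Delta_u d s) <-> Delta_c d x @[x --> 0%R^'+] --> 0.
Proof.
split=> [u_gt0 | c_to0 s s0].
  apply: ge0_cvge0 => [|e /u_gt0/ereal_gt0_gt_real [delta delta0]].
    exact: Delta_c_ge0.
  move=> /Delta_c_le_of_lt_Delta_u c_le.
  apply: filterS (nbhs_right_le delta0) => x xdelta.
  by apply: le_trans c_le; exact: le_Delta_c.
have c_lt : \forall x \near 0%R^'+, Delta_c d x < s%:E.
  by apply: (c_to0 [set y | y < s%:E]); apply: open_ereal_lt'; rewrite lte_fin.
have [x [x0 /Delta_u_ge_of_Delta_c_lt]] := filter_ex (filterI (nbhs_right_gt 0%R) c_lt).
by apply: lt_le_trans; rewrite lte_fin.
Qed.

Lemma coarse_StoneP :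
  (forall s, (0 <= s)%R -> Delta_c d s < +oo) <-> Delta_u d x @[x --> +oo%R] --> +oo.
Proof.
split=> [c_fin | u_toy s _]; last first.
  have [x /Delta_c_le_of_lt_Delta_u c_le] := filter_ex (cvgey_gt u_toy s).
  by apply: le_lt_trans c_le _; rewrite ltry.
apply/cvgeyPge => A.
have /Delta_c_fin_num c_real := c_fin _ (normr_ge0 A).
set r := (fine (Delta_c d `|A|) + 1)%R.
have absA_le : (`|A|)%:E <= Delta_u d r.
  by apply: Delta_u_ge_of_Delta_c_lt; rewrite -{1}(fineK c_real) lte_fin ltrDl.
apply: filterS (nbhs_pinfty_ge (num_real r)) => x rx.
have A_le : A%:E <= (`|A|)%:E by rewrite lee_fin ler_norm.
exact: le_trans (le_trans A_le absA_le) (le_Delta_u rx).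
Qed.

End StoneFunctions.

Theorem lemma3p4 (R : realType) (T : Type) (d : T -> T -> R) :
  is_metric d ->
  (* (i) monotonicity on [0, oo) *)
  ((forall s t : R, 0 <= s -> s <= t -> (Delta_c d s <= Delta_c d t)%E) /\
   (forall s t : R, 0 <= s -> s <= t -> (Delta_u d s <= Delta_u d t)%E)) /\
  (* (ii) *)
  (forall Rr : R, 0 < Rr -> (Delta_c d Rr < +oo)%E ->
     forall eps : R, 0 < eps ->
       (Rr%:E <= Delta_u d (fine (Delta_c d Rr) + eps))%E) /\
  (* (iii) (Delta_u r finite, so that Delta_u r - eps lies in the domain) *)
  (forall r : R, 0 < r -> (0 < Delta_u d r)%E -> (Delta_u d r < +oo)%E ->
     forall eps : R, 0 < eps -> (eps%:E < Delta_u d r)%E ->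
       (Delta_c d (fine (Delta_u d r) - eps) <= r%:E)%E) /\
  (* (iv) uniform Stone property *)
  ((forall s : R, 0 < s -> (0 < Delta_u d s)%E) <->
     (Delta_c d x @[x --> 0^'+] --> 0%E)) /\
  (* (v) coarse Stone property *)
  ((forall s : R, 0 <= s -> (Delta_c d s < +oo)%E) <->
     (Delta_u d x @[x --> +oo] --> +oo%E)).
Proof.
move=> _; split; first by split=> s t _; [exact: le_Delta_c | exact: le_Delta_u].
split.
  move=> s _ /Delta_c_fin_num c_fin eps eps0.
  by apply: Delta_u_ge_of_Delta_c_lt; rewrite -{1}(fineK c_fin) lte_fin ltrDl.
split.
  move=> r _ u_gt0 u_lty eps eps0 _.
  have u_fin : Delta_u d r \is a fin_num by rewrite ge0_fin_numE // ltW.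
  by apply: Delta_c_le_of_lt_Delta_u; rewrite -{2}(fineK u_fin) lte_fin ltrBlDr ltrDl.
by split; [exact: uniform_StoneP | exact: coarse_StoneP].
Qed.
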